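(* Let $n\ge1$, $v>0$, $0\le\rho<\frac12v$, and let $B=(b_{jk})_{j,k=0}^n\in\mathbb{R}^{(n+1)\times(n+1)}$ with $b_{jk}=v-k$ if $j>k$, $b_{kk}=\frac v2-k-\rho$, $b_{jk}=-j$ if $j<k$. Set $\gamma=\sqrt{\frac14v^2-\rho^2}$. Then $$\det B=\Big(\frac v2-\rho\Big)(-i\gamma)^{n-1}\Big\{-i\gamma\,U_n\Big(-\frac{i(2\rho+1)}{2\gamma}\Big)+\Big(\frac v2+\rho\Big)U_{n-1}\Big(-\frac{i(2\rho+1)}{2\gamma}\Big)\Big\}.$$
   Context: $U_m$ denotes the $m$th Chebyshev polynomial of the second kind (evaluated at complex arguments as a polynomial); $i=\sqrt{-1}$. *)

From HB Require Import structures.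
From mathcomp Require Import all_boot all_order all_algebra.
From mathcomp.real_closed Require Export complex.
Set Implicit Arguments. Unset Strict Implicit. Unset Printing Implicit Defensive.
Import Order.TTheory GRing.Theory Num.Theory.
Local Open Scope ring_scope.

Fixpoint chebU_pair (C : comNzRingType) (m : nat) : {poly C} * {poly C} :=
  match m with
  | 0%N => (1, 2%:R *: 'X)
  | m'.+1 => let: (a, b) := chebU_pair C m' in (b, 2%:R *: 'X * b - a)
  end.

Definition chebU (C : comNzRingType) (m : nat) : {poly C} := (chebU_pair C m).1.

Definition matB (R : numFieldType) (n : nat) (v rho : R) : 'M[R]_n.+1 :=
  \matrix_(j < n.+1, k < n.+1)
    if (k < j)%N then v - (k : nat)%:R
    else if j == k then v / 2%:R - (k : nat)%:R - rho
    else - (j : nat)%:R.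

From mathcomp Require Import all_boot all_order all_algebra.
From mathcomp.real_closed Require Import complex.
From mathcomp Require Import ring lra zify.
Set Implicit Arguments.
Unset Strict Implicit.
Unset Printing Implicit Defensive.
Import Order.TTheory GRing.Theory Num.Theory.
Local Open Scope ring_scope.

(* Subtracting the penultimate row of B from the last one leaves only the
   entries q = v/2 + rho and p - 1 (with p = v/2 - rho) in the last row, and
   the (n, n-1) minor is the next smaller B with its last diagonal entry
   lowered by p.  Hence the leading principal minors D_s of B satisfy
   D_{s+2} = (p - 1 - q) D_{s+1} + pq D_s, D_0 = 1, D_1 = p.  For c = -i gamma
   one has 2xc = p - 1 - q and -c^2 = gamma^2 = pq, so c^k U_k(x) solves the
   same recurrence, and matching initial values gives the closed form. *)

Lemma eq_linrec2 (R : pzSemiRingType) (a b : R) (f g : nat -> R) :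
  f 0%N = g 0%N -> f 1%N = g 1%N ->
  (forall m, f m.+2 = a * f m.+1 + b * f m) ->
  (forall m, g m.+2 = a * g m.+1 + b * g m) ->
  f =1 g.
Proof.
move=> eq0 eq1 fSS gSS.
suff fg m : f m = g m /\ f m.+1 = g m.+1 by move=> m; case: (fg m).
by elim: m => [|m [IHm IHm1]] //; rewrite fSS gSS IHm IHm1.
Qed.

Section ChebyshevU.
Variable R : comNzRingType.

Lemma chebU_pairE m : chebU_pair R m = (chebU R m, chebU R m.+1).
Proof. by rewrite /chebU /=; case: (chebU_pair R m). Qed.

Lemma chebUSS m : chebU R m.+2 = 2%:R *: 'X * chebU R m.+1 - chebU R m.
Proof. by rewrite {1}/chebU /= chebU_pairE. Qed.

Lemma linrec2_chebU (p q c x : R) (D : nat -> R) :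
  2%:R * x * c = p - 1 - q -> - c ^+ 2 = p * q ->
  D 0%N = 1 -> D 1%N = p ->
  (forall m, D m.+2 = (p - 1 - q) * D m.+1 + p * q * D m) ->
  forall n, D n.+2 = p * c ^+ n * (c * (chebU R n.+1).[x] + q * (chebU R n).[x]).
Proof.
move=> xc c2 D0 D1 DSS.
pose W k := c ^+ k * (chebU R k).[x].
have W0 : W 0%N = 1 by rewrite /W expr0 mul1r hornerC.
have W1 : W 1%N = p - 1 - q by rewrite /W /chebU /= hornerZ hornerX -xc; ring.
have WSS k : W k.+2 = (p - 1 - q) * W k.+1 + p * q * W k.
  by rewrite /W chebUSS -xc -c2 hornerD hornerN hornerM hornerZ hornerX !exprS; ring.
have DW : (fun k => D k.+2) =1 (fun k => p * (W k.+1 + q * W k)).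
  apply: eq_linrec2 (fun m => DSS m.+2) _ => /=.
  - by rewrite DSS D1 D0 W1 W0; ring.
  - by rewrite !DSS D1 D0 WSS W1 W0; ring.
  - by move=> k; rewrite (WSS k.+1) (WSS k); ring.
by move=> n; rewrite DW /W exprS; ring.
Qed.

End ChebyshevU.

Section Cofactors.
Variables (R : comPzRingType) (n : nat).

Lemma expand_det_row_sub (A : 'M[R]_n) i1 i2 : i1 != i2 ->
  \det A = \sum_j (A i1 j - A i2 j) * cofactor A i1 j.
Proof.
move=> neq_i12; rewrite (expand_det_row _ i1).
have alien_cofactors : \sum_j A i2 j * cofactor A i1 j = 0.
  have := congr1 (fun M : 'M_n => M i2 i1) (mul_mx_adj A).
  rewrite !mxE eq_sym (negbTE neq_i12) mulr0n => adj_eq0.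
  rewrite -[RHS]adj_eq0.
  by apply: eq_bigr => j _; rewrite mxE.
by under [RHS]eq_bigr do rewrite mulrBl; rewrite sumrB alien_cofactors subr0.
Qed.

Lemma expand_det_row_diff (A B : 'M[R]_n) i : row' i A = row' i B ->
  \det A = \det B + \sum_j (A i j - B i j) * cofactor B i j.
Proof.
move=> eq_AB; rewrite (expand_det_row A i) (expand_det_row B i) -big_split /=.
apply: eq_bigr => j _; have -> : cofactor A i j = cofactor B i j.
  rewrite /cofactor; congr (_ * \det _); apply/matrixP => k l.
  by have := congr1 (fun M : 'M_(n.-1, n) => M k (lift j l)) eq_AB; rewrite !mxE.
by rewrite mulrBl addrC subrK.
Qed.

End Cofactors.

Section MatB.
Variables (R : numFieldType) (v rho : R).
Local Notation p := (v / 2%:R - rho).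
Local Notation q := (v / 2%:R + rho).

(* [detB s] is the leading principal minor of size [s]: [matB s'] has size
   [s'.+1], and the empty minor is [1]. *)
Definition detB (s : nat) : R := if s is s'.+1 then \det (matB s' v rho) else 1.

Lemma cofactor_matB_max m : cofactor (matB m v rho) ord_max ord_max = detB m.
Proof.
rewrite /cofactor addnn -signr_odd odd_double expr0 mul1r.
case: m => [|m] /=; first by rewrite det_mx00.
by congr (\det _); apply/matrixP => j k; rewrite !mxE (inj_eq lift_inj) !lift_max.
Qed.

Lemma cofactor_matB_subdiag m :
  cofactor (matB m.+1 v rho) ord_max (widen_ord (leqnSn _) ord_max) =
  p * detB m - detB m.+1.
Proof.
rewrite /cofactor /= addSn addnn -signr_odd /= odd_double expr1 mulN1r.
set C := row' _ _.
(* [C] is [matB m] with its last diagonal entry replaced by [- m%:R]. *)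
have detC : \det C = detB m.+1 - p * detB m.
  rewrite (@expand_det_row_diff _ _ _ (matB m v rho) ord_max); last first.
    apply/matrixP => -[j /= jm] [k /= km]; rewrite !mxE -!val_eqE /= /bump.
    rewrite (leqNgt m j) jm /= (ltnNge m j) (ltnW jm) /=.
    have [// | mk] := ltnP k m.
    have -> : k = m by lia.
    by rewrite /= add1n !ifF //; lia.
  rewrite big_ord_recr /= big1 ?add0r => [|k _]; last first.
    by rewrite !mxE -!val_eqE /= /bump (leqNgt m k) ltn_ord ltnn /= !add0n ltn_ord subrr mul0r.
  rewrite cofactor_matB_max !mxE -!val_eqE /= /bump leqnn ltnn eqxx /=.
  by rewrite ltnNge leqnSn /= ltn_eqF //; ring.
by rewrite detC /=; ring.
Qed.

Lemma detB_rec m : detB m.+2 = (p - 1 - q) * detB m.+1 + p * q * detB m.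
Proof.
rewrite /= (@expand_det_row_sub _ _ _ ord_max (widen_ord (leqnSn _) ord_max)); last first.
  by rewrite -val_eqE /= gtn_eqF.
rewrite !big_ord_recr /= big1 ?add0r => [|k _]; last first.
  by rewrite !mxE -!val_eqE /= ltnS ltnW ltn_ord ?subrr ?mul0r.
rewrite cofactor_matB_subdiag cofactor_matB_max !mxE -!val_eqE /=.
rewrite ltnSn !ltnn !eqxx (ltnNge m.+1) leqnSn /= ltn_eqF //.
by field.
Qed.

End MatB.

Local Open Scope complex_scope.

Theorem lemma5p4 (R : rcfType) (n : nat) (v rho : R) :
  (1 <= n)%N -> 0 < v -> 0 <= rho -> rho < v / 2%:R ->
  let gamma : R := Num.sqrt (v ^+ 2 / 4%:R - rho ^+ 2) in
  let I : R[i] := Complex 0 1 in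
  let x : R[i] := - I * ((2%:R * rho + 1)%:C / (2%:R * gamma)%:C) in
  (\det (matB n v rho))%:C =
    (v / 2%:R - rho)%:C * (- I * gamma%:C) ^+ n.-1 *
    (- I * gamma%:C * (chebU _ n).[x] + (v / 2%:R + rho)%:C * (chebU _ n.-1).[x]).
Proof.
move=> n_ge1 v_gt0 rho_ge0 rho_lt gamma I x.
have radicandE : v ^+ 2 / 4%:R - rho ^+ 2 = (v / 2%:R - rho) * (v / 2%:R + rho).
  by field.
have pq_gt0 : 0 < (v / 2%:R - rho) * (v / 2%:R + rho) by apply: mulr_gt0; lra.
have gamma2 : gamma ^+ 2 = (v / 2%:R - rho) * (v / 2%:R + rho).
  by rewrite /gamma radicandE sqr_sqrtr // ltW.
have gamma_neq0 : gamma != 0 by rewrite /gamma radicandE gt_eqF // sqrtr_gt0.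
case: n n_ge1 => [//|n] _ /=.
apply: (linrec2_chebU (D := fun s => (detB v rho s)%:C)).
- have -> : (v / 2%:R - rho)%:C - 1 - (v / 2%:R + rho)%:C =
            (v / 2%:R - rho - 1 - (v / 2%:R + rho))%:C by rewrite !rmorphB rmorph1.
  have -> : 2%:R * x * (- I * gamma%:C) =
            I ^+ 2 * (2%:R * ((2%:R * rho + 1) / (2%:R * gamma)) * gamma)%:C.
    by rewrite /x -fmorph_div !rmorphM rmorph_nat; ring.
  by rewrite sqr_i mulN1r -rmorphN; congr (_%:C); field.
- by rewrite exprMn sqrrN sqr_i -rmorphXn gamma2 rmorphM mulN1r opprK.
- by rewrite rmorph1.
- by rewrite /= det_mx11 mxE ltnn eqxx subr0.
- by move=> m; rewrite detB_rec !(rmorphB, rmorphD, rmorphM, rmorph1).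
Qed.
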